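(* Let $g(x)=1-(1-x^2)^4$ for $|x|\le1$ and $g(x)=1$ otherwise. For $p_o\in]0,\sqrt2[$ let $\mathcal{T}(p_o)$ be the smallest period of the (periodic) function $q$, where $(q,p)$ is the global solution of $\dot q=p$, $\dot p=-g'(q)$ with $(q(0),p(0))=(0,p_o)$. Then: (i) $\mathcal{T}$ is continuous on $]0,\sqrt2[$; (ii) $\mathcal{T}$ is strictly increasing; (iii) $\inf_{p_o\in]0,\sqrt2[}\mathcal{T}(p_o)=\pi/\sqrt2$; (iv) $\lim_{p_o\to\sqrt2}\mathcal{T}(p_o)=+\infty$. *)

From Stdlib Require Import Reals.
From Coquelicot Require Import Coquelicot.
Open Scope R_scope.

Definition g (x : R) : R :=
  if Rle_dec (Rabs x) 1 then 1 - (1 - x ^ 2) ^ 4 else 1.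

Definition is_global_solution (po : R) (q p : R -> R) : Prop :=
  (forall t : R, is_derive q t (p t)) /\
  (forall t : R, is_derive p t (- Derive g (q t))) /\
  q 0 = 0 /\ p 0 = po.

Definition is_period (f : R -> R) (T : R) : Prop :=
  forall t : R, f (t + T) = f t.

Definition is_min_period (f : R -> R) (T : R) : Prop :=
  0 < T /\ is_period f T /\ (forall T' : R, 0 < T' < T -> ~ is_period f T').

(* Energy is conserved: p^2/2 + g q = po^2/2.  Parametrising this level by an angle th with
   p = po cos th and g q = (po^2/2) sin^2 th, the equations of motion become th' = 1 / k(th)
   for an explicit density k >= 1/(2 sqrt 2) which is an increasing function of
   (po^2/2) sin^2 th.  Hence q = Q(th(t)) with th the inverse of the time map
   th |-> int_0^th k, and q has smallest period T(po) = int_0^(2 pi) k because Q attains its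
   maximum only where sin th = 1.  T is increasing because k is; its infimum pi/sqrt 2 is its
   limit at po = 0, where k = 1/(2 sqrt 2); it is continuous because k is uniformly
   continuous; and it blows up because k is at least of order (2 - po^2)^(-3/4) on a window
   of width of order (2 - po^2)^(1/2) around th = pi/2.  Since g' is Lipschitz, Gronwall's
   lemma shows that this is the only solution. *)

From Stdlib Require Import Reals Ranalysis5 Lra Psatz.
From Coquelicot Require Import Coquelicot.
Open Scope R_scope.

Lemma sqrt2_pos : 0 < sqrt 2.
Proof. apply sqrt_lt_R0; lra. Qed.

Lemma sqrt2_sq : sqrt 2 ^ 2 = 2.
Proof. apply pow2_sqrt; lra. Qed.

Lemma one_lt_sqrt2 : 1 < sqrt 2.
Proof. rewrite <- sqrt_1 at 1. apply sqrt_lt_1; lra. Qed.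

Lemma sqrt2_lt_2 : sqrt 2 < 2.
Proof. pose proof sqrt2_pos. pose proof sqrt2_sq. nra. Qed.

Lemma lt_sqrt2_sq po : 0 < po < sqrt 2 -> po ^ 2 < 2.
Proof. intros H. rewrite <- sqrt2_sq. pose proof sqrt2_pos. simpl. nra. Qed.

Lemma abs_lt_sqrt2 po : po ^ 2 < 2 -> Rabs po < sqrt 2.
Proof.
  intros H. pose proof sqrt2_pos. rewrite <- sqrt2_sq, <- (pow2_abs po) in H.
  pose proof (Rabs_pos po). nra.
Qed.

Lemma inv_2sqrt2_pos : 0 < / (2 * sqrt 2).
Proof. apply Rinv_0_lt_compat. pose proof sqrt2_pos. lra. Qed.

Lemma sin_sq_le1 x : 0 <= sin x ^ 2 <= 1.
Proof. pose proof (SIN_bound x). split; [apply pow2_ge_0 | nra]. Qed.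

Lemma sin_sq_le_sq y : sin y ^ 2 <= y ^ 2.
Proof.
  pose proof (sin_sq_le1 y) as Hs. pose proof PI2_1.
  destruct (Rle_or_lt 1 (Rabs y)) as [Hy | Hy].
  - rewrite <- (pow2_abs y). nra.
  - apply Rabs_def2 in Hy. destruct (Rtotal_order y 0) as [Hneg | [-> | Hpos]].
    + pose proof (sin_gt_0 (- y) ltac:(lra) ltac:(lra)).
      pose proof (sin_lt_x (- y) ltac:(lra)). rewrite sin_neg in *. nra.
    + rewrite sin_0. lra.
    + pose proof (sin_gt_0 y ltac:(lra) ltac:(lra)). pose proof (sin_lt_x y ltac:(lra)). nra.
Qed.

Lemma sin_lt_1 x : PI / 2 < x < 5 * PI / 2 -> sin x < 1.
Proof.
  intros H. replace x with (2 * ((x - PI / 2) / 2) + PI / 2) by field.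
  rewrite sin_plus, sin_PI2, cos_PI2, cos_2a_sin.
  assert (0 < sin ((x - PI / 2) / 2)) by (apply sin_gt_0; lra).
  nra.
Qed.

Lemma continuity_pt_of_ex_derive (f : R -> R) x : ex_derive f x -> continuity_pt f x.
Proof. intros H. apply continuity_pt_filterlim, (ex_derive_continuous f x H). Qed.

Lemma derive_lower_bound (f df : R -> R) (m x y : R) :
  (forall z, is_derive f z (df z)) -> (forall z, m <= df z) -> x <= y ->
  m * (y - x) <= f y - f x.
Proof.
  intros Hf Hm Hxy.
  destruct (MVT_gen f x y df) as [c [_ ->]].
  - intros z _. apply Hf.
  - intros z _. apply continuity_pt_of_ex_derive. eexists. apply Hf.
  - specialize (Hm c). nra.
Qed.

Lemma lipschitz_of_derive_bound (f df : R -> R) (L x y : R) :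
  (forall z, is_derive f z (df z)) -> (forall z, Rabs (df z) <= L) ->
  Rabs (f x - f y) <= L * Rabs (x - y).
Proof.
  intros Hf HL.
  destruct (MVT_abs f df y x) as [c [-> _]].
  - intros c _. apply is_derive_Reals, Hf.
  - apply Rmult_le_compat_r; [apply Rabs_pos | apply HL].
Qed.

Lemma gronwall_zero (f df : R -> R) (L : R) :
  (forall s, is_derive f s (df s)) -> (forall s, 0 <= f s) ->
  (forall s, Rabs (df s) <= L * f s) -> f 0 = 0 -> forall t, f t = 0.
Proof.
  intros Hf Hpos Hdf H0 t.
  assert (Hdf' : forall s, - (L * f s) <= df s <= L * f s)
    by (intro s; apply Rabs_le_between, Hdf).
  destruct (Rle_or_lt 0 t) as [Ht | Ht].
  - assert (H : 0 * (t - 0) <= - (f t * exp (- L * t)) - - (f 0 * exp (- L * 0))).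
    { apply (derive_lower_bound (fun s => - (f s * exp (- L * s)))
        (fun s => (L * f s - df s) * exp (- L * s))); auto.
      - intro s. auto_derive; [eexists; apply Hf|].
        replace (Derive (fun x => f x) s) with (df s)
          by (symmetry; apply is_derive_unique, Hf).
        ring.
      - intro s. apply Rmult_le_pos; [specialize (Hdf' s); lra | left; apply exp_pos]. }
    rewrite H0 in H. pose proof (exp_pos (- L * t)). specialize (Hpos t). nra.
  - assert (H : 0 * (0 - t) <= f 0 * exp (L * 0) - f t * exp (L * t)).
    { apply (derive_lower_bound (fun s => f s * exp (L * s))
        (fun s => (df s + L * f s) * exp (L * s))); [| | lra].
      - intro s. auto_derive; [eexists; apply Hf|].
        replace (Derive (fun x => f x) s) with (df s)
          by (symmetry; apply is_derive_unique, Hf).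
        ring.
      - intro s. apply Rmult_le_pos; [specialize (Hdf' s); lra | left; apply exp_pos]. }
    rewrite H0 in H. pose proof (exp_pos (L * t)). specialize (Hpos t). nra.
Qed.

Section InverseFunction.

Variables (f k : R -> R) (m : R).
Hypothesis m_pos : 0 < m.
Hypothesis f_derive : forall x, is_derive f x (k x).
Hypothesis k_ge : forall x, m <= k x.

Lemma lt_of_derive_ge x y : x < y -> f x < f y.
Proof. intros H. pose proof (derive_lower_bound f k m x y f_derive k_ge). nra. Qed.

Lemma inj_of_derive_ge x y : f x = f y -> x = y.
Proof.
  intros E. destruct (Rtotal_order x y) as [H | [H | H]]; auto;
    apply lt_of_derive_ge in H; lra.
Qed.

Lemma surj_of_derive_ge t : {x | f x = t}.
Proof.
  assert (Hc : continuity f).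
  { intro x. apply continuity_pt_of_ex_derive. eexists. apply f_derive. }
  set (d := Rabs (t - f 0) / m).
  assert (Hd : 0 <= d) by (apply Rdiv_le_0_compat; [apply Rabs_pos | lra]).
  pose proof (derive_lower_bound f k m 0 d f_derive k_ge Hd) as Hup.
  pose proof (derive_lower_bound f k m (- d) 0 f_derive k_ge ltac:(lra)) as Hlo.
  replace (m * (d - 0)) with (Rabs (t - f 0)) in Hup by (unfold d; field; lra).
  replace (m * (0 - - d)) with (Rabs (t - f 0)) in Hlo by (unfold d; field; lra).
  pose proof (Rle_abs (t - f 0)). pose proof (Rabs_maj2 (t - f 0)).
  destruct (IVT_gen f (- d) d t Hc) as [x [_ Hx]]; [|now exists x].
  split.
  - apply Rle_trans with (f (- d)); [apply Rmin_l | lra].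
  - apply Rle_trans with (f d); [lra | apply Rmax_r].
Qed.

Variable h : R -> R.
Hypothesis f_h : forall t, f (h t) = t.

Lemma inverse_lipschitz s t : Rabs (h s - h t) <= Rabs (s - t) / m.
Proof.
  apply (Rmult_le_reg_r m); [exact m_pos|].
  unfold Rdiv. rewrite Rmult_assoc, Rinv_l, Rmult_1_r by lra.
  destruct (Rle_or_lt (h t) (h s)) as [H | H].
  - pose proof (derive_lower_bound f k m _ _ f_derive k_ge H) as Hg. rewrite !f_h in Hg.
    assert (0 <= m * (h s - h t)) by (apply Rmult_le_pos; lra).
    rewrite !Rabs_right by lra. lra.
  - pose proof (derive_lower_bound f k m _ _ f_derive k_ge (Rlt_le _ _ H)) as Hg.
    rewrite !f_h in Hg.
    assert (0 < m * (h t - h s)) by (apply Rmult_lt_0_compat; lra).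
    rewrite !Rabs_left by lra. lra.
Qed.

Lemma is_derive_inverse t : is_derive h t (/ k (h t)).
Proof.
  assert (Hcont : continuity_pt h t).
  { intros eps Heps. exists (m * eps). split; [nra|].
    intros s [_ Hs]. simpl in *. unfold R_dist in *.
    eapply Rle_lt_trans; [apply inverse_lipschitz|].
    apply (Rmult_lt_reg_r m); [exact m_pos|].
    unfold Rdiv. rewrite Rmult_assoc, Rinv_l by lra. lra. }
  assert (Hmono : forall s u, s < u -> h s < h u).
  { intros s u Hsu. destruct (Rlt_or_le (h s) (h u)) as [H | H]; auto.
    pose proof (derive_lower_bound f k m _ _ f_derive k_ge H). rewrite !f_h in H0. nra. }
  assert (Hincr : h (t - 1) <= h t <= h (t + 1)) by (split; left; apply Hmono; lra).
  pose (Hf := fun a (_ : h (t - 1) <= a <= h (t + 1)) =>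
                ex_derive_Reals_0 f a (ex_intro _ _ (f_derive a))).
  assert (Hk : derive_pt f (h t) (Hf (h t) Hincr) = k (h t))
    by (rewrite Derive_Reals; apply is_derive_unique, f_derive).
  pose proof (derivable_pt_lim_recip_interv f h (t - 1) (t + 1) t Hf Hcont
    ltac:(lra) ltac:(lra) Hincr) as H.
  rewrite Hk in H. apply is_derive_Reals. unfold Rdiv in H. rewrite Rmult_1_l in H.
  apply H; [intros x _; apply f_h|]. pose proof (k_ge (h t)). lra.
Qed.

End InverseFunction.

Lemma exists_derivable_inverse (f k : R -> R) (m : R) :
  0 < m -> (forall x, is_derive f x (k x)) -> (forall x, m <= k x) ->
  exists h, (forall t, f (h t) = t) /\ forall t, is_derive h t (/ k (h t)).
Proof.
  intros Hm Hf Hk.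
  set (h := fun t => proj1_sig (surj_of_derive_ge f k m Hm Hf Hk t)).
  assert (Hh : forall t, f (h t) = t)
    by (intro t; exact (proj2_sig (surj_of_derive_ge f k m Hm Hf Hk t))).
  exists h. split; [exact Hh | apply (is_derive_inverse f k m Hm Hf Hk h Hh)].
Qed.

Lemma RInt_const_R (a b c : R) : RInt (fun _ => c) a b = c * (b - a).
Proof.
  rewrite (RInt_const (V := R_CompleteNormedModule)).
  change (Rmult (b - a) c = c * (b - a)). ring.
Qed.

Lemma is_derive_RInt_0 (f : R -> R) x :
  (forall y, continuous f y) -> is_derive (RInt f 0) x (f x).
Proof.
  intros Hc. apply (is_derive_RInt f (RInt f 0) 0 x); [|apply Hc].
  apply filter_forall. intro b. apply (RInt_correct (V := R_CompleteNormedModule)).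
  apply (ex_RInt_continuous (V := R_CompleteNormedModule)). intros; apply Hc.
Qed.

Lemma RInt_periodic_shift (f : R -> R) (T x : R) :
  (forall y, f (y + T) = f y) -> (forall y, continuous f y) ->
  RInt f 0 (x + T) = RInt f 0 x + RInt f 0 T.
Proof.
  intros Hper Hc.
  assert (Hex : forall a b, ex_RInt f a b)
    by (intros; apply (ex_RInt_continuous (V := R_CompleteNormedModule)); intros; apply Hc).
  rewrite <- (RInt_Chasles (V := R_CompleteNormedModule) f 0 T (x + T)) by apply Hex.
  pose proof (RInt_comp_lin (V := R_CompleteNormedModule) f 1 T 0 x (Hex _ _)) as Hlin.
  rewrite Rmult_0_r, Rplus_0_l, Rmult_1_l in Hlin. rewrite <- Hlin.
  simpl. unfold plus, scal; simpl. unfold mult; simpl. rewrite Rplus_comm. f_equal.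
  apply RInt_ext. intros y _. rewrite Rmult_1_l, Rmult_1_l, Hper. reflexivity.
Qed.

Lemma RInt_ge_on_subinterval (f : R -> R) (a b c d M : R) :
  a <= c <= d -> d <= b -> (forall x, continuous f x) ->
  (forall x, a <= x <= b -> 0 <= f x) -> (forall x, c <= x <= d -> M <= f x) ->
  M * (d - c) <= RInt f a b.
Proof.
  intros Hc Hd Hcont Hpos HM.
  assert (Hex : forall x y, ex_RInt f x y)
    by (intros; apply (ex_RInt_continuous (V := R_CompleteNormedModule)); intros; apply Hcont).
  rewrite <- (RInt_Chasles (V := R_CompleteNormedModule) f a c b),
    <- (RInt_Chasles (V := R_CompleteNormedModule) f c d b) by apply Hex.
  simpl. unfold plus; simpl.
  assert (0 <= RInt f a c) by (apply RInt_ge_0; [lra | apply Hex | intros; apply Hpos; lra]).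
  assert (0 <= RInt f d b) by (apply RInt_ge_0; [lra | apply Hex | intros; apply Hpos; lra]).
  assert (M * (d - c) <= RInt f c d).
  { rewrite <- RInt_const_R. apply RInt_le; [lra | apply ex_RInt_const | apply Hex |].
    intros; apply HM; lra. }
  lra.
Qed.

Lemma continuous_RInt_param (F : R -> R -> R) (a b x0 : R) : a <= b ->
  (forall eps, 0 < eps -> exists d, 0 < d /\ forall x, Rabs (x - x0) < d ->
     ex_RInt (F x) a b /\ forall t, a <= t <= b -> Rabs (F x t - F x0 t) <= eps) ->
  continuous (fun x => RInt (F x) a b) x0.
Proof.
  intros Hab HF. apply continuity_pt_filterlim. intros eps Heps.
  assert (He : 0 < eps / (2 * (b - a + 1))) by (apply Rdiv_lt_0_compat; lra).
  destruct (HF _ He) as [d [Hd Hclose]].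
  exists d. split; [exact Hd|]. intros x [_ Hx]. change (Rabs (x - x0) < d) in Hx.
  destruct (Hclose x Hx) as [Hex Hxt].
  destruct (Hclose x0 ltac:(rewrite Rminus_diag, Rabs_R0; exact Hd)) as [Hex0 _].
  pose proof (RInt_minus (V := R_CompleteNormedModule) (F x) (F x0) a b Hex Hex0) as Hm.
  change (RInt (fun t => F x t - F x0 t) a b = RInt (F x) a b - RInt (F x0) a b) in Hm.
  change (Rabs (RInt (F x) a b - RInt (F x0) a b) < eps). rewrite <- Hm.
  eapply Rle_lt_trans.
  - apply abs_RInt_le_const; [exact Hab | | exact Hxt].
    apply (ex_RInt_minus (V := R_NormedModule)); assumption.
  - apply Rle_lt_trans with ((b - a + 1) * (eps / (2 * (b - a + 1)))).
    + apply Rmult_le_compat_r; lra.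
    + replace ((b - a + 1) * (eps / (2 * (b - a + 1)))) with (eps / 2) by (field; lra). lra.
Qed.

(** * The potential and uniqueness of solutions *)

Lemma is_derive_Rmax0_pow (n : nat) (y : R) :
  is_derive (fun y => Rmax 0 y ^ S (S n)) y (INR (S (S n)) * Rmax 0 y ^ S n).
Proof.
  destruct (Rtotal_order y 0) as [Hy | [-> | Hy]].
  - rewrite Rmax_left, pow_i, Rmult_0_r by (lra || lia).
    apply is_derive_ext_loc with (fun _ => 0); [|auto_derive; auto].
    apply locally_interval with m_infty 0; simpl; auto.
    intros z _ Hz; simpl in Hz. rewrite Rmax_left by lra. simpl; ring.
  - (* the difference quotient at 0 is bounded by |h| *)
    rewrite Rmax_left, pow_i, Rmult_0_r by (lra || lia).
    apply is_derive_Reals. intros eps Heps.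
    exists (mkposreal _ (Rmin_pos _ _ Rlt_0_1 Heps)). intros h Hh0 Hh. simpl in Hh.
    pose proof (Rmin_l 1 eps). pose proof (Rmin_r 1 eps).
    assert (Hh' : 0 < Rabs h) by (apply Rabs_pos_lt; exact Hh0).
    assert (Hm : 0 <= Rmax 0 h <= Rabs h).
    { split; [apply Rmax_l | apply Rmax_lub; [apply Rabs_pos | apply Rle_abs]]. }
    assert (Hsq : Rmax 0 h ^ S (S n) <= Rabs h * Rabs h).
    { apply Rle_trans with (Rabs h ^ S (S n)); [apply pow_incr; lra|]. simpl.
      assert (Rabs h ^ n <= 1) by (rewrite <- (pow1 n); apply pow_incr; lra).
      assert (0 <= Rabs h * Rabs h) by nra. nra. }
    rewrite Rplus_0_l, (Rmax_left 0 0), Rminus_0_r by lra.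
    rewrite (pow_i (S (S n))), Rminus_0_r by lia.
    unfold Rdiv. rewrite Rabs_mult, Rabs_inv, Rabs_right by (apply Rle_ge, pow_le; lra).
    apply (Rmult_lt_reg_r (Rabs h)); [lra|].
    rewrite Rmult_assoc, Rinv_l, Rmult_1_r by lra. nra.
  - rewrite Rmax_right by lra.
    apply is_derive_ext_loc with (fun y => y ^ S (S n)); [|auto_derive; auto; simpl; ring].
    apply locally_interval with 0 p_infty; simpl; auto.
    intros z Hz _; simpl in Hz. rewrite Rmax_right by lra. reflexivity.
Qed.

Lemma is_derive_Rmax0_1_sq_pow (n : nat) (x : R) :
  is_derive (fun x => Rmax 0 (1 - x ^ 2) ^ S (S n)) x
    (-2 * x * (INR (S (S n)) * Rmax 0 (1 - x ^ 2) ^ S n)).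
Proof.
  apply (is_derive_comp (fun y => Rmax 0 y ^ S (S n)) (fun x => 1 - x ^ 2)).
  - apply is_derive_Rmax0_pow.
  - auto_derive; auto; ring.
Qed.

Definition dg (x : R) : R := 8 * x * Rmax 0 (1 - x ^ 2) ^ 3.

Lemma g_Rmax x : g x = 1 - Rmax 0 (1 - x ^ 2) ^ 4.
Proof.
  unfold g. destruct (Rle_dec (Rabs x) 1) as [H | H].
  - apply Rabs_le_between in H. rewrite Rmax_right by nra. reflexivity.
  - assert (1 < x ^ 2) by (rewrite <- (pow2_abs x); nra).
    rewrite Rmax_left by lra. ring.
Qed.

Lemma is_derive_g x : is_derive g x (dg x).
Proof.
  apply is_derive_ext with (fun x => 1 - Rmax 0 (1 - x ^ 2) ^ 4).
  { intro t. symmetry. apply g_Rmax. }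
  pose proof (is_derive_Rmax0_1_sq_pow 2 x) as H.
  (* Hiding the [Rmax] term keeps [auto_derive] from trying to differentiate [Rmax]. *)
  pose (h := fun x => Rmax 0 (1 - x ^ 2) ^ 4).
  change (is_derive h x (-2 * x * (INR 4 * Rmax 0 (1 - x ^ 2) ^ 3))) in H.
  change (is_derive (fun x => 1 - h x) x (dg x)). clearbody h.
  auto_derive; [eexists; exact H|].
  replace (Derive (fun x => h x) x) with (-2 * x * (INR 4 * Rmax 0 (1 - x ^ 2) ^ 3))
    by (symmetry; apply is_derive_unique, H).
  unfold dg. simpl. ring.
Qed.

Lemma Derive_g x : Derive g x = dg x.
Proof. apply is_derive_unique, is_derive_g. Qed.

Lemma dg_lipschitz x y : Rabs (dg x - dg y) <= 48 * Rabs (x - y).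
Proof.
  apply (lipschitz_of_derive_bound dg
    (fun x => 8 * Rmax 0 (1 - x ^ 2) ^ 3 - 48 * x ^ 2 * Rmax 0 (1 - x ^ 2) ^ 2)).
  - intro z. pose proof (is_derive_Rmax0_1_sq_pow 1 z) as H.
    pose (h := fun x => Rmax 0 (1 - x ^ 2) ^ 3).
    change (is_derive h z (-2 * z * (INR 3 * Rmax 0 (1 - z ^ 2) ^ 2))) in H.
    change (is_derive (fun x => 8 * x * h x) z
      (8 * Rmax 0 (1 - z ^ 2) ^ 3 - 48 * z ^ 2 * Rmax 0 (1 - z ^ 2) ^ 2)).
    assert (Ez : h z = Rmax 0 (1 - z ^ 2) ^ 3) by reflexivity. clearbody h.
    auto_derive; [eexists; exact H|].
    replace (Derive (fun x => h x) z) with (-2 * z * (INR 3 * Rmax 0 (1 - z ^ 2) ^ 2))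
      by (symmetry; apply is_derive_unique, H).
    rewrite Ez. simpl. ring.
  - intro z. destruct (Rle_or_lt (1 - z ^ 2) 0) as [H | H].
    + rewrite Rmax_left by lra. replace (_ - _) with 0 by ring. rewrite Rabs_R0; lra.
    + rewrite Rmax_right by lra. set (m := 1 - z ^ 2).
      replace (z ^ 2) with (1 - m) by (unfold m; ring).
      assert (Hm : 0 < m <= 1) by (unfold m in *; nra).
      assert (0 <= m ^ 2 <= 1) by (split; nra).
      apply Rabs_le. split; nra.
Qed.

Lemma is_global_solution_unique po q1 p1 q2 p2 :
  is_global_solution po q1 p1 -> is_global_solution po q2 p2 -> forall t, q1 t = q2 t.
Proof.
  intros [Dq1 [Dp1 [Q1 P1]]] [Dq2 [Dp2 [Q2 P2]]].
  set (dist := fun s => (q1 s - q2 s) ^ 2 + (p1 s - p2 s) ^ 2).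
  set (ddist := fun s => 2 * (q1 s - q2 s) * (p1 s - p2 s)
                         + 2 * (p1 s - p2 s) * (dg (q2 s) - dg (q1 s))).
  assert (Hd : forall s, is_derive dist s (ddist s)).
  { intro s. unfold dist, ddist.
    pose proof (Dq1 s). pose proof (Dq2 s). pose proof (Dp1 s). pose proof (Dp2 s).
    rewrite Derive_g in *.
    auto_derive; [repeat split; eexists; eassumption|].
    repeat match goal with H : is_derive ?f s ?l |- _ =>
      replace (Derive (fun x => f x) s) with l by (symmetry; apply is_derive_unique, H); clear H
    end.
    ring. }
  assert (Hb : forall s, Rabs (ddist s) <= 49 * dist s).
  { intro s. unfold ddist, dist.
    pose proof (dg_lipschitz (q2 s) (q1 s)) as Hc.
    rewrite (Rabs_minus_sym (q2 s)) in Hc.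
    set (a := q1 s - q2 s) in *. set (b := p1 s - p2 s). set (c := dg (q2 s) - dg (q1 s)) in *.
    assert (c ^ 2 <= 48 ^ 2 * a ^ 2).
    { rewrite <- (pow2_abs c), <- (pow2_abs a). pose proof (Rabs_pos c). nra. }
    pose proof (pow2_ge_0 (48 * b - c)). pose proof (pow2_ge_0 (48 * b + c)).
    pose proof (pow2_ge_0 (a - b)). pose proof (pow2_ge_0 (a + b)).
    apply Rabs_le. split; nra. }
  assert (Hpos : forall s, 0 <= dist s).
  { intro s. unfold dist.
    pose proof (pow2_ge_0 (q1 s - q2 s)). pose proof (pow2_ge_0 (p1 s - p2 s)). lra. }
  assert (H0 : dist 0 = 0) by (unfold dist; rewrite Q1, Q2, P1, P2; ring).
  intro t. pose proof (gronwall_zero dist ddist 49 Hd Hpos Hb H0 t).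
  unfold dist in *. pose proof (pow2_ge_0 (q1 t - q2 t)). pose proof (pow2_ge_0 (p1 t - p2 t)). nra.
Qed.

(* Angle coordinates on the level p^2/2 + g q = po^2/2: p = po cos th and g q = gpot po th,
   that is 1 - q^2 = qgap (gpot po th) with |q| <= 1.  Then q = qphase po th satisfies
   dq/dth = p * dtime po th, so along the flow dth/dt = 1 / dtime po th. *)
Definition gpot (po th : R) : R := po ^ 2 / 2 * sin th ^ 2.
Definition qgap (u : R) : R := sqrt (sqrt (1 - u)).
Definition dfac (a : R) : R := (1 + a) * (1 + a ^ 2).
Definition kdens (u : R) : R := sqrt (dfac (qgap u)) / (4 * sqrt 2 * qgap u ^ 3).
Definition dtime (po th : R) : R := kdens (gpot po th).
Definition qphase (po th : R) : R := po / sqrt 2 * sin th / sqrt (dfac (qgap (gpot po th))).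

Lemma gpot_range po th : po ^ 2 < 2 -> 0 <= gpot po th < 1.
Proof. intros H. pose proof (sin_sq_le1 th). unfold gpot. split; nra. Qed.

Lemma gpot_lipschitz a b th : Rabs a <= 2 -> Rabs b <= 2 ->
  Rabs (gpot a th - gpot b th) <= 2 * Rabs (a - b).
Proof.
  intros Ha Hb. pose proof (sin_sq_le1 th). unfold gpot.
  replace (a ^ 2 / 2 * sin th ^ 2 - b ^ 2 / 2 * sin th ^ 2)
    with ((a - b) * ((a + b) / 2 * sin th ^ 2)) by field.
  rewrite Rabs_mult, (Rmult_comm 2). apply Rmult_le_compat_l; [apply Rabs_pos|].
  pose proof (Rabs_triang a b).
  rewrite Rabs_mult, (Rabs_right (sin th ^ 2)) by lra. unfold Rdiv.
  rewrite Rabs_mult, (Rabs_right (/ 2)) by lra. pose proof (Rabs_pos (a + b)). nra.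
Qed.

Lemma gpot_le a b th : a ^ 2 <= b ^ 2 -> gpot a th <= gpot b th.
Proof. intros H. unfold gpot. pose proof (pow2_ge_0 (sin th)). nra. Qed.

Lemma gpot_lt a b th : a ^ 2 < b ^ 2 -> sin th <> 0 -> gpot a th < gpot b th.
Proof. intros H Hs. unfold gpot. pose proof (pow2_gt_0 _ Hs). nra. Qed.

Lemma qgap_pos u : u < 1 -> 0 < qgap u.
Proof. intros H. apply sqrt_lt_R0, sqrt_lt_R0. lra. Qed.

Lemma qgap_pow4 u : u < 1 -> qgap u ^ 4 = 1 - u.
Proof.
  intros H. unfold qgap. change 4%nat with (2 * 2)%nat. rewrite pow_mult.
  rewrite (pow2_sqrt (sqrt _)) by apply sqrt_pos. apply pow2_sqrt. lra.
Qed.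

Lemma qgap_lt u v : u < v < 1 -> qgap v < qgap u.
Proof. intros H. unfold qgap. apply sqrt_lt_1; try apply sqrt_pos. apply sqrt_lt_1; lra. Qed.

Lemma qgap_le u v : u <= v < 1 -> qgap v <= qgap u.
Proof.
  intros H. destruct (Req_dec u v) as [-> | E]; [lra|]. left. apply qgap_lt. lra.
Qed.

Lemma qgap_0 : qgap 0 = 1.
Proof. unfold qgap. rewrite Rminus_0_r, !sqrt_1. reflexivity. Qed.

Lemma dfac_pos a : 0 <= a -> 0 < dfac a.
Proof. intros H. unfold dfac. pose proof (pow2_ge_0 a). apply Rmult_lt_0_compat; lra. Qed.

Lemma kdens_eq u : u < 1 ->
  kdens u = sqrt ((/ qgap u) ^ 3 + (/ qgap u) ^ 4 + (/ qgap u) ^ 5 + (/ qgap u) ^ 6) / (4 * sqrt 2).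
Proof.
  intros H. pose proof (qgap_pos u H) as Ha. pose proof sqrt2_pos. unfold kdens.
  replace ((/ qgap u) ^ 3 + (/ qgap u) ^ 4 + (/ qgap u) ^ 5 + (/ qgap u) ^ 6)
    with (dfac (qgap u) / (qgap u ^ 3) ^ 2) by (unfold dfac; field; lra).
  rewrite sqrt_div_alt by (apply pow_lt, pow_lt; lra). rewrite sqrt_pow2 by (apply pow_le; lra).
  field. lra.
Qed.

Lemma kdens_lt u v : u < v < 1 -> kdens u < kdens v.
Proof.
  intros H. rewrite !kdens_eq by lra. pose proof sqrt2_pos.
  pose proof (qgap_pos v (proj2 H)). pose proof (qgap_lt u v H).
  set (bu := / qgap u). set (bv := / qgap v).
  assert (Hb : 0 < bu < bv) by (split; [apply Rinv_0_lt_compat | apply Rinv_lt_contravar]; nra).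
  apply Rmult_lt_compat_r; [apply Rinv_0_lt_compat; lra|].
  assert (Hpos : forall n, 0 < bu ^ n) by (intro n; apply pow_lt; lra).
  assert (Hle : forall n, bu ^ n <= bv ^ n) by (intro n; apply pow_incr; lra).
  assert (bu ^ 3 < bv ^ 3) by (assert (bu * bu < bv * bv) by nra; simpl; nra).
  pose proof (Hpos 3%nat). pose proof (Hpos 4%nat).
  pose proof (Hpos 5%nat). pose proof (Hpos 6%nat).
  pose proof (Hle 4%nat). pose proof (Hle 5%nat). pose proof (Hle 6%nat).
  apply sqrt_lt_1; lra.
Qed.

Lemma kdens_le u v : u <= v < 1 -> kdens u <= kdens v.
Proof.
  intros H. destruct (Req_dec u v) as [-> | E]; [lra|]. left. apply kdens_lt. lra.
Qed.

Lemma kdens_0 : kdens 0 = / (2 * sqrt 2).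
Proof.
  unfold kdens. rewrite qgap_0. unfold dfac.
  replace ((1 + 1) * (1 + 1 ^ 2)) with (2 ^ 2) by ring. rewrite sqrt_pow2 by lra.
  pose proof sqrt2_pos. field. lra.
Qed.

Lemma kdens_ge u : 0 <= u < 1 -> / (2 * sqrt 2) <= kdens u.
Proof. intros H. rewrite <- kdens_0. apply kdens_le. lra. Qed.

Lemma kdens_ge_qgap u : u < 1 -> / (4 * sqrt 2 * qgap u ^ 3) <= kdens u.
Proof.
  intros H. pose proof (qgap_pos u H) as Ha. pose proof sqrt2_pos. unfold kdens, Rdiv.
  rewrite <- (Rmult_1_l (/ (4 * sqrt 2 * qgap u ^ 3))) at 1.
  apply Rmult_le_compat_r.
  - left. apply Rinv_0_lt_compat, Rmult_lt_0_compat; [lra | apply pow_lt; lra].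
  - rewrite <- sqrt_1. apply sqrt_le_1_alt. unfold dfac. pose proof (pow2_ge_0 (qgap u)). nra.
Qed.

Lemma kdens_continuous u : u < 1 -> continuity_pt kdens u.
Proof.
  intros H. apply continuity_pt_of_ex_derive. unfold kdens, qgap, dfac.
  assert (Hr : 0 < sqrt (1 - u)) by (apply sqrt_lt_R0; lra).
  assert (Ha : 0 < sqrt (sqrt (1 - u))) by (apply sqrt_lt_R0; lra).
  pose proof sqrt2_pos.
  auto_derive. replace (1 + - u) with (1 - u) by ring.
  set (a := sqrt (sqrt (1 - u))) in *.
  assert (0 < (1 + a) * (1 + a * (a * 1))) by nra.
  repeat split; try lra.
  apply Rmult_integral_contrapositive. split; [lra|].
  apply Rgt_not_eq. repeat apply Rmult_lt_0_compat; lra.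
Qed.

Lemma dtime_ge po th : po ^ 2 < 2 -> / (2 * sqrt 2) <= dtime po th.
Proof. intros H. apply kdens_ge, gpot_range, H. Qed.

Lemma dtime_pos po th : po ^ 2 < 2 -> 0 < dtime po th.
Proof. intros H. eapply Rlt_le_trans; [apply inv_2sqrt2_pos | apply dtime_ge, H]. Qed.

Lemma dtime_continuous po th : po ^ 2 < 2 -> continuous (dtime po) th.
Proof.
  intros H. apply continuity_pt_filterlim, (continuity_pt_comp (gpot po) kdens).
  - apply continuity_pt_of_ex_derive. unfold gpot. auto_derive. auto.
  - apply kdens_continuous, gpot_range, H.
Qed.

Lemma dtime_periodic po th : dtime po (th + 2 * PI) = dtime po th.
Proof.
  unfold dtime, gpot. rewrite sin_plus, sin_2PI, cos_2PI, Rmult_0_r, Rplus_0_r, Rmult_1_r.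
  reflexivity.
Qed.

Lemma dtime_uniform po0 : po0 ^ 2 < 2 -> forall eps, 0 < eps -> exists d, 0 < d /\
  forall po, Rabs (po - po0) < d ->
    po ^ 2 < 2 /\ forall th, Rabs (dtime po th - dtime po0 th) <= eps.
Proof.
  intros H0 eps Heps. pose proof (abs_lt_sqrt2 po0 H0) as Hp0. pose proof sqrt2_lt_2.
  set (b0 := (Rabs po0 + sqrt 2) / 2).
  assert (Hb0 : Rabs po0 < b0 < sqrt 2) by (unfold b0; lra).
  assert (Hb2 : b0 ^ 2 < 2) by (rewrite <- sqrt2_sq; pose proof (Rabs_pos po0); simpl; nra).
  assert (Hc : forall u, 0 <= u <= b0 ^ 2 / 2 -> continuity_pt kdens u)
    by (intros; apply kdens_continuous; lra).
  destruct (Heine_cor2 Hc (mkposreal _ Heps)) as [d1 Hd1]. simpl in Hd1. pose proof (cond_pos d1).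
  exists (Rmin (b0 - Rabs po0) (d1 / 4)). split; [apply Rmin_pos; lra|].
  intros po Hpo. pose proof (Rmin_l (b0 - Rabs po0) (d1 / 4)).
  pose proof (Rmin_r (b0 - Rabs po0) (d1 / 4)). pose proof (Rabs_triang_inv po po0).
  assert (Hsq : forall x, Rabs x < b0 -> x ^ 2 < b0 ^ 2)
    by (intros x Hx; rewrite <- (pow2_abs x); pose proof (Rabs_pos x); nra).
  assert (Hpo2 : po ^ 2 < b0 ^ 2) by (apply Hsq; lra).
  pose proof (Hsq po0 (proj1 Hb0)).
  split; [lra|]. intro th. left. pose proof (sin_sq_le1 th).
  apply Hd1.
  - pose proof (gpot_range po th ltac:(lra)). unfold gpot in *. split; nra.
  - pose proof (gpot_range po0 th H0). unfold gpot in *. split; nra.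
  - eapply Rle_lt_trans; [apply gpot_lipschitz; lra | lra].
Qed.

Lemma qphase_sq po th : po ^ 2 < 2 -> qphase po th ^ 2 = 1 - qgap (gpot po th).
Proof.
  intros H. pose proof (gpot_range po th H) as Hu.
  pose proof (qgap_pos _ (proj2 Hu)) as Ha. pose proof (qgap_pow4 _ (proj2 Hu)) as E4.
  pose proof (dfac_pos _ (Rlt_le _ _ Ha)) as HD. pose proof sqrt2_pos.
  unfold qphase. unfold Rdiv. rewrite !Rpow_mult_distr, !pow_inv, !pow2_sqrt by lra.
  replace (po ^ 2 * / 2 * sin th ^ 2) with (gpot po th) by (unfold gpot; field).
  set (a := qgap (gpot po th)) in *. replace (gpot po th) with (1 - a ^ 4) by lra.
  unfold dfac in *. pose proof (pow2_ge_0 a). field. lra.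
Qed.

Lemma is_derive_qphase po th : po ^ 2 < 2 ->
  is_derive (qphase po) th (po * cos th * dtime po th).
Proof.
  intros Hpo. pose proof (gpot_range po th Hpo) as Hu.
  unfold qphase, dtime, kdens, qgap, dfac, gpot in *.
  auto_derive;
    replace (1 + - (po * (po * 1) / 2 * (sin th * (sin th * 1))))
      with (1 - po ^ 2 / 2 * sin th ^ 2) by field;
    assert (Hw : 0 < 1 - po ^ 2 / 2 * sin th ^ 2) by lra;
    set (w := 1 - po ^ 2 / 2 * sin th ^ 2) in *;
    assert (Hr : 0 < sqrt w) by (apply sqrt_lt_R0; lra);
    assert (Erw : sqrt w * sqrt w = w) by (apply sqrt_sqrt; lra);
    set (r := sqrt w) in *;
    assert (Ha : 0 < sqrt r) by (apply sqrt_lt_R0; lra);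
    assert (Ear : sqrt r * sqrt r = r) by (apply sqrt_sqrt; lra);
    set (a := sqrt r) in *;
    replace (a * (a * 1)) with (a ^ 2) by ring;
    assert (HS : 0 < sqrt ((1 + a) * (1 + a ^ 2))) by (apply sqrt_lt_R0; nra).
  - repeat split; nra.
  - assert (ES : sqrt ((1 + a) * (1 + a ^ 2)) * sqrt ((1 + a) * (1 + a ^ 2))
                 = (1 + a) * (1 + a ^ 2)) by (apply sqrt_sqrt; nra).
    set (S := sqrt ((1 + a) * (1 + a ^ 2))) in *.
    pose proof sqrt2_pos. assert (E2 : sqrt 2 * sqrt 2 = 2) by (apply sqrt_sqrt; lra).
    set (s2 := sqrt 2) in *.
    (* everything reduces to g q = po^2/2 sin^2 th, i.e. 1 - a^4 = po^2/2 sin^2 th *)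
    assert (Ew : po ^ 2 * sin th ^ 2 = 2 * (1 - a ^ 4)).
    { replace (a ^ 4) with ((a * a) * (a * a)) by ring. rewrite Ear, Erw. unfold w. field. }
    clearbody w r a S s2. subst r w.
    field_simplify_eq; [|lra].
    replace (S ^ 4) with ((S * S) * (S * S)) by ring. replace (S ^ 2) with (S * S) by ring.
    rewrite ES.
    replace (12 * po ^ 3 * cos th * sin th ^ 2 * a ^ 2 + 8 * po ^ 3 * cos th * sin th ^ 2 * a
             + 4 * po ^ 3 * cos th * sin th ^ 2)
      with (4 * po * cos th * (po ^ 2 * sin th ^ 2) * (3 * a ^ 2 + 2 * a + 1)) by ring.
    rewrite Ew. ring.
Qed.

Lemma dg_qphase po th : po ^ 2 < 2 -> dg (qphase po th) = po * sin th / dtime po th.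
Proof.
  intros H. pose proof (qphase_sq po th H) as Eq. pose proof (gpot_range po th H) as Hu.
  pose proof (qgap_pos _ (proj2 Hu)) as Ha.
  pose proof (dfac_pos _ (Rlt_le _ _ Ha)) as HD. pose proof (sqrt_lt_R0 _ HD) as HS.
  pose proof sqrt2_pos. pose proof sqrt2_sq.
  unfold dg. rewrite Eq, Rmax_right by lra.
  replace (1 - (1 - qgap (gpot po th))) with (qgap (gpot po th)) by ring.
  unfold dtime, kdens, qphase. field_simplify_eq.
  - rewrite pow2_sqrt by lra. ring.
  - repeat split; try lra; apply pow_nonzero; lra.
Qed.

Lemma qphase_lt_top po x : 0 < po -> po ^ 2 < 2 -> sin x < 1 -> qphase po x < qphase po (PI / 2).
Proof.
  intros Hpo Hsq Hx.
  assert (Hsign : forall y, 0 < sqrt (dfac (qgap (gpot po y))) /\ 0 < po / sqrt 2).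
  { intro y. pose proof (gpot_range po y Hsq). pose proof sqrt2_pos. split.
    - apply sqrt_lt_R0, dfac_pos. left. apply qgap_pos. lra.
    - apply Rdiv_lt_0_compat; lra. }
  assert (Htop : 0 < qphase po (PI / 2)).
  { destruct (Hsign (PI / 2)). unfold qphase. rewrite sin_PI2.
    apply Rdiv_lt_0_compat; lra. }
  destruct (Rle_or_lt (sin x) 0) as [Hneg | Hpos].
  - destruct (Hsign x). unfold qphase at 1. unfold Rdiv at 2.
    assert (po / sqrt 2 * sin x <= 0) by nra.
    assert (0 < / sqrt (dfac (qgap (gpot po x)))) by (apply Rinv_0_lt_compat; lra). nra.
  - assert (Hg : gpot po x < gpot po (PI / 2)).
    { unfold gpot. rewrite sin_PI2. assert (0 < po ^ 2) by (apply pow_lt; lra).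
      assert (sin x ^ 2 < 1) by nra. nra. }
    pose proof (qgap_lt _ _ (conj Hg (proj2 (gpot_range po (PI / 2) Hsq)))).
    pose proof (qphase_sq po x Hsq). pose proof (qphase_sq po (PI / 2) Hsq).
    destruct (Rlt_or_le (qphase po x) (qphase po (PI / 2))) as [Hlt | Hge]; [exact Hlt|].
    assert (qphase po (PI / 2) ^ 2 <= qphase po x ^ 2) by (apply pow_incr; lra). lra.
Qed.

(** * The explicit periodic solution *)

Definition time (po x : R) : R := RInt (dtime po) 0 x.
Definition period (po : R) : R := time po (2 * PI).

Lemma is_derive_time po x : po ^ 2 < 2 -> is_derive (time po) x (dtime po x).
Proof. intros H. apply is_derive_RInt_0. intro y. apply dtime_continuous, H. Qed.

Lemma time_0 po : time po 0 = 0.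
Proof. apply (RInt_point (V := R_CompleteNormedModule)). Qed.

Lemma time_shift po x : po ^ 2 < 2 -> time po (x + 2 * PI) = time po x + period po.
Proof.
  intros H. apply RInt_periodic_shift; [apply dtime_periodic|].
  intro y. apply dtime_continuous, H.
Qed.

Lemma ex_RInt_dtime po a b : po ^ 2 < 2 -> ex_RInt (dtime po) a b.
Proof.
  intros H. apply (ex_RInt_continuous (V := R_CompleteNormedModule)).
  intros; apply dtime_continuous, H.
Qed.

Section ExplicitSolution.

Variable po : R.
Hypothesis po_range : 0 < po < sqrt 2.
Variable th : R -> R.
Hypothesis time_th : forall t, time po (th t) = t.
Hypothesis th_derive : forall t, is_derive th t (/ dtime po (th t)).

Let po_sq : po ^ 2 < 2 := lt_sqrt2_sq po po_range.
Let time_derive x : is_derive (time po) x (dtime po x) := is_derive_time po x po_sq.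
Let dtime_bound x : / (2 * sqrt 2) <= dtime po x := dtime_ge po x po_sq.
Let time_lt := lt_of_derive_ge _ _ _ inv_2sqrt2_pos time_derive dtime_bound.
Let time_inj := inj_of_derive_ge _ _ _ inv_2sqrt2_pos time_derive dtime_bound.

Let lt_of_time_lt x y : time po x < time po y -> x < y.
Proof.
  intros H. destruct (Rlt_or_le x y) as [Hxy | [Hyx | ->]]; auto.
  - apply time_lt in Hyx. lra.
  - lra.
Qed.

Let th_time x : th (time po x) = x.
Proof. apply time_inj, time_th. Qed.

Let th_0 : th 0 = 0.
Proof. rewrite <- (time_0 po) at 1. apply th_time. Qed.

Let th_shift t : th (t + period po) = th t + 2 * PI.
Proof. apply time_inj. rewrite time_shift by exact po_sq. rewrite !time_th. reflexivity. Qed.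

Lemma is_global_solution_phase :
  is_global_solution po (fun t => qphase po (th t)) (fun t => po * cos (th t)).
Proof.
  assert (Hk : forall t, dtime po (th t) <> 0) by (intro t; apply Rgt_not_eq, dtime_pos, po_sq).
  split; [|split; [|split]].
  - intro t.
    replace (po * cos (th t)) with (/ dtime po (th t) * (po * cos (th t) * dtime po (th t)))
      by (field; apply Hk).
    apply (is_derive_comp (qphase po) th); [apply is_derive_qphase, po_sq | apply th_derive].
  - intro t. rewrite Derive_g, dg_qphase by exact po_sq.
    replace (- (po * sin (th t) / dtime po (th t)))
      with (/ dtime po (th t) * (po * - sin (th t))) by (field; apply Hk).
    apply (is_derive_comp (fun x => po * cos x) th); [auto_derive; auto; ring | apply th_derive].
  - rewrite th_0. unfold qphase. rewrite sin_0. unfold Rdiv. ring.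
  - rewrite th_0, cos_0. ring.
Qed.

Lemma is_min_period_phase : is_min_period (fun t => qphase po (th t)) (period po).
Proof.
  split; [|split].
  - rewrite <- (time_0 po). apply time_lt. pose proof PI_RGT_0. lra.
  - intro t. rewrite th_shift. unfold qphase, gpot.
    rewrite sin_plus, sin_2PI, cos_2PI, Rmult_0_r, Rplus_0_r, Rmult_1_r. reflexivity.
  - intros T' [HT0 HT] Hper. specialize (Hper (time po (PI / 2))).
    cbv beta in Hper. rewrite th_time in Hper.
    set (x := th (time po (PI / 2) + T')) in Hper.
    assert (Hx : time po x = time po (PI / 2) + T') by apply time_th.
    assert (Hrange : PI / 2 < x < 5 * PI / 2).
    { replace (5 * PI / 2) with (PI / 2 + 2 * PI) by field.
      split; apply lt_of_time_lt; rewrite ?time_shift, Hx by exact po_sq; lra. }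
    pose proof (qphase_lt_top po x (proj1 po_range) po_sq (sin_lt_1 x Hrange)). lra.
Qed.

End ExplicitSolution.

Lemma is_min_period_ext (f g : R -> R) (T : R) :
  (forall t, f t = g t) -> is_min_period f T -> is_min_period g T.
Proof.
  intros E [HT [Hper Hmin]]. split; [exact HT | split].
  - intro t. rewrite <- !E. apply Hper.
  - intros T' HT' Hg. apply (Hmin T' HT'). intro t. rewrite !E. apply Hg.
Qed.

Lemma exists_periodic_solution po : 0 < po < sqrt 2 ->
  exists q p, is_global_solution po q p /\ is_min_period q (period po).
Proof.
  intros H. pose proof (lt_sqrt2_sq po H) as Hsq.
  destruct (exists_derivable_inverse (time po) (dtime po) _ inv_2sqrt2_pos
    (fun x => is_derive_time po x Hsq) (fun x => dtime_ge po x Hsq)) as [th [Hth Hd]].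
  exists (fun t => qphase po (th t)), (fun t => po * cos (th t)).
  split; [apply is_global_solution_phase | apply is_min_period_phase]; assumption.
Qed.

Lemma is_min_period_global_solution po q p : 0 < po < sqrt 2 ->
  is_global_solution po q p -> is_min_period q (period po).
Proof.
  intros H Hs. destruct (exists_periodic_solution po H) as [q0 [p0 [Hs0 Hmin]]].
  apply (is_min_period_ext q0); [|exact Hmin].
  apply (is_global_solution_unique po q0 p0 q p Hs0 Hs).
Qed.

(** * Properties of the period *)

Lemma period_ge po : po ^ 2 < 2 -> PI / sqrt 2 <= period po.
Proof.
  intros H. pose proof sqrt2_pos. pose proof PI_RGT_0.
  replace (PI / sqrt 2) with (/ (2 * sqrt 2) * (2 * PI - 0)) by (field; lra).
  rewrite <- RInt_const_R.
  apply RInt_le; [lra | apply ex_RInt_const | apply ex_RInt_dtime, H |].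
  intros x _. apply dtime_ge, H.
Qed.

Lemma period_0 : period 0 = PI / sqrt 2.
Proof.
  unfold period, time. rewrite (RInt_ext _ (fun _ => kdens 0)).
  - rewrite RInt_const_R, kdens_0. pose proof sqrt2_pos. field. lra.
  - intros x _. unfold dtime. replace (gpot 0 x) with 0 by (unfold gpot; field). reflexivity.
Qed.

Lemma period_lt a b : 0 <= a -> a < b -> b ^ 2 < 2 -> period a < period b.
Proof.
  intros Ha Hab Hb. assert (Hab2 : a ^ 2 < b ^ 2) by nra.
  assert (Ha2 : a ^ 2 < 2) by lra. pose proof PI_RGT_0.
  unfold period, time.
  rewrite <- (RInt_Chasles (V := R_CompleteNormedModule) (dtime a) 0 PI (2 * PI))
    by apply ex_RInt_dtime, Ha2.
  rewrite <- (RInt_Chasles (V := R_CompleteNormedModule) (dtime b) 0 PI (2 * PI))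
    by apply ex_RInt_dtime, Hb.
  apply Rplus_lt_le_compat.
  - apply RInt_lt; [lra | intros; apply dtime_continuous, Hb |
                     intros; apply dtime_continuous, Ha2 |].
    intros x Hx. apply kdens_lt. split; [|apply gpot_range, Hb].
    apply gpot_lt; [exact Hab2 | apply Rgt_not_eq, sin_gt_0; lra].
  - apply RInt_le; [lra | apply ex_RInt_dtime, Ha2 | apply ex_RInt_dtime, Hb |].
    intros x _. apply kdens_le. split; [apply gpot_le; lra | apply gpot_range, Hb].
Qed.

Lemma period_continuous po : po ^ 2 < 2 -> continuous period po.
Proof.
  intros H. pose proof PI_RGT_0. apply continuous_RInt_param; [lra|].
  intros eps Heps. destruct (dtime_uniform po H eps Heps) as [d [Hd Hclose]].
  exists d. split; [exact Hd|]. intros x Hx. destruct (Hclose x Hx) as [Hx2 Hxt].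
  split; [apply ex_RInt_dtime, Hx2 | intros; apply Hxt].
Qed.

Lemma period_glb :
  is_glb_Rbar (fun y => exists po, 0 < po < sqrt 2 /\ y = period po) (PI / sqrt 2).
Proof.
  pose proof one_lt_sqrt2. split.
  - intros y [po [Hpo ->]]. apply period_ge, lt_sqrt2_sq, Hpo.
  - intros [b | |] Hb; simpl; auto.
    + apply Rnot_lt_le. intro Hlt.
      assert (Hc : continuity_pt period 0)
        by (apply continuity_pt_filterlim, period_continuous; simpl; lra).
      destruct (Hc (b - PI / sqrt 2) ltac:(lra)) as [d [Hd Hclose]].
      set (po := Rmin d 1 / 2).
      pose proof (Rmin_l d 1). pose proof (Rmin_r d 1). pose proof (Rmin_pos d 1 Hd Rlt_0_1).
      assert (Hpo : 0 < po < sqrt 2) by (unfold po; lra).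
      assert (Hpo_d : Rabs (po - 0) < d) by (rewrite Rminus_0_r, Rabs_right; unfold po; lra).
      specialize (Hclose po (conj (conj I (Rlt_not_eq _ _ (proj1 Hpo))) Hpo_d)).
      change (Rabs (period po - period 0) < b - PI / sqrt 2) in Hclose.
      rewrite period_0 in Hclose. apply Rabs_def2 in Hclose.
      specialize (Hb (period po) (ex_intro _ po (conj Hpo eq_refl))). simpl in Hb. lra.
    + apply (Hb (period 1)). exists 1. split; [lra | reflexivity].
Qed.

(* Near the turning point th = PI / 2 the potential is within 2 - po^2 of its value 1 at
   q = 1, so the density is at least of order (2 - po^2)^(-3/4); the window has width of
   order (2 - po^2)^(1/2). *)
Lemma dtime_ge_near_top po th : po ^ 2 < 2 -> Rabs (th - PI / 2) <= sqrt (1 - po ^ 2 / 2) ->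
  / (4 * sqrt 2 * qgap (po ^ 2 - 1) ^ 3) <= dtime po th.
Proof.
  intros Hsq Hth. pose proof sqrt2_pos. pose proof (gpot_range po th Hsq) as Hg.
  assert (Hlow : po ^ 2 - 1 <= gpot po th).
  { pose proof (sin_sq_le_sq (PI / 2 - th)) as Hsin. rewrite sin_shift in Hsin.
    assert ((PI / 2 - th) ^ 2 <= 1 - po ^ 2 / 2).
    { rewrite <- (pow2_abs (PI / 2 - th)), <- (pow2_sqrt (1 - po ^ 2 / 2)) by lra.
      apply pow_incr. rewrite Rabs_minus_sym. split; [apply Rabs_pos | exact Hth]. }
    pose proof (sin2_cos2 th). unfold Rsqr in *. unfold gpot. simpl in *. nra. }
  eapply Rle_trans; [|apply kdens_ge_qgap; lra].
  pose proof (qgap_pos (gpot po th) ltac:(lra)).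
  apply Rinv_le_contravar; [apply Rmult_lt_0_compat; [lra | apply pow_lt; lra]|].
  apply Rmult_le_compat_l; [lra|]. apply pow_incr. split; [lra | apply qgap_le; lra].
Qed.

Lemma period_ge_blowup po : 0 < po < sqrt 2 -> / (4 * sqrt (sqrt (2 - po ^ 2))) <= period po.
Proof.
  intros Hpo. pose proof (lt_sqrt2_sq po Hpo) as Hsq. pose proof sqrt2_pos. pose proof PI2_1.
  set (s := qgap (po ^ 2 - 1)).
  assert (Es : sqrt (sqrt (2 - po ^ 2)) = s) by (unfold s, qgap; do 2 f_equal; ring).
  assert (Hs : 0 < s) by (apply qgap_pos; lra).
  assert (Hs4 : s ^ 4 = 2 - po ^ 2) by (unfold s; rewrite qgap_pow4 by lra; ring).
  set (d := sqrt (1 - po ^ 2 / 2)).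
  assert (Hd : 0 < d) by (apply sqrt_lt_R0; lra).
  assert (Hd2 : d ^ 2 = 1 - po ^ 2 / 2) by (apply pow2_sqrt; lra).
  assert (Hd1 : d < 1) by nra.
  assert (Ed : 2 * d = sqrt 2 * s ^ 2).
  { apply Rsqr_inj; [lra | pose proof (pow2_ge_0 s); nra |]. unfold Rsqr.
    pose proof sqrt2_sq. simpl in *. nra. }
  assert (Hnear : forall x, PI / 2 - d <= x <= PI / 2 + d -> / (4 * sqrt 2 * s ^ 3) <= dtime po x)
    by (intros x Hx; apply dtime_ge_near_top; [exact Hsq | fold d; apply Rabs_le; lra]).
  pose proof (RInt_ge_on_subinterval (dtime po) 0 (2 * PI) (PI / 2 - d) (PI / 2 + d)
    (/ (4 * sqrt 2 * s ^ 3)) ltac:(lra) ltac:(lra) (fun x => dtime_continuous po x Hsq)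
    (fun x _ => Rlt_le _ _ (dtime_pos po x Hsq)) Hnear) as Hbound.
  replace (/ (4 * sqrt 2 * s ^ 3) * (PI / 2 + d - (PI / 2 - d))) with (/ (4 * s)) in Hbound.
  - rewrite Es. exact Hbound.
  - replace (PI / 2 + d - (PI / 2 - d)) with (2 * d) by ring. rewrite Ed. field. lra.
Qed.

(* By monotonicity it suffices to exhibit one po1 < sqrt 2 with M < period po1. *)
Lemma period_lim : filterlim period (at_left (sqrt 2)) (Rbar_locally p_infty).
Proof.
  intros P [M HM]. pose proof one_lt_sqrt2.
  set (eta := / (4 * (Rabs M + 1))).
  assert (Heta : 0 < eta <= 1) by (unfold eta; pose proof (Rabs_pos M); split;
    [apply Rinv_0_lt_compat; lra | rewrite <- Rinv_1; apply Rinv_le_contravar; lra]).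
  assert (He4 : 0 < eta ^ 4 <= 1)
    by (split; [apply pow_lt; lra | rewrite <- (pow1 4); apply pow_incr; lra]).
  set (po1 := sqrt (2 - eta ^ 4)).
  assert (Hpo1 : 0 < po1 < sqrt 2)
    by (unfold po1; split; [apply sqrt_lt_R0 | apply sqrt_lt_1]; lra).
  assert (Hper1 : M < period po1).
  { eapply Rlt_le_trans; [|apply period_ge_blowup, Hpo1].
    unfold po1. rewrite pow2_sqrt by lra. replace (2 - (2 - eta ^ 4)) with ((eta ^ 2) ^ 2) by ring.
    rewrite !sqrt_pow2 by (try apply pow2_ge_0; lra).
    replace (/ (4 * eta)) with (Rabs M + 1) by (unfold eta; pose proof (Rabs_pos M); field; lra).
    pose proof (Rle_abs M). lra. }
  exists (mkposreal (sqrt 2 - po1) ltac:(lra)). intros y Hy Hlt. apply HM.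
  change (Rabs (y - sqrt 2) < sqrt 2 - po1) in Hy. apply Rabs_def2 in Hy.
  eapply Rlt_trans; [exact Hper1|]. apply period_lt; [lra | lra | apply lt_sqrt2_sq; lra].
Qed.

Theorem lemma5p14 :
  exists T : R -> R,
    (forall po : R, 0 < po < sqrt 2 ->
       (exists q p : R -> R, is_global_solution po q p) /\
       (forall q p : R -> R, is_global_solution po q p -> is_min_period q (T po))) /\
    (forall po : R, 0 < po < sqrt 2 -> continuous T po) /\
    (forall a b : R, 0 < a < sqrt 2 -> 0 < b < sqrt 2 -> a < b -> T a < T b) /\
    is_glb_Rbar (fun y : R => exists po : R, 0 < po < sqrt 2 /\ y = T po)
                (Finite (PI / sqrt 2)) /\
    filterlim T (at_left (sqrt 2)) (Rbar_locally p_infty).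
Proof.
  exists period. split; [|split; [|split; [|split]]].
  - intros po Hpo. split.
    + destruct (exists_periodic_solution po Hpo) as [q [p [Hs _]]]. exists q, p. exact Hs.
    + intros q p. apply is_min_period_global_solution, Hpo.
  - intros po Hpo. apply period_continuous, lt_sqrt2_sq, Hpo.
  - intros a b Ha Hb Hab. apply period_lt; [lra | exact Hab | apply lt_sqrt2_sq, Hb].
  - exact period_glb.
  - exact period_lim.
Qed.
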